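(* Let $d\in\mathbb N$, let $\mathcal S=\{s_i\}_{i=1}^{2^d}\subset[1,4]$ be strictly increasing and $\mathcal A=\{\alpha_j\}_{j=1}^d\subset\mathbb R$ be strictly increasing. Set $\|\mathcal S\|:=\min_{1\le i<j\le 2^d}|s_j-s_i|$ and $\Pi_j\mathcal A:=\prod_{i=1,i\ne j}^d|\alpha_j-\alpha_i|$ (with $\Pi_1\mathcal A=1$ if $d=1$). Suppose $A>0$ and real numbers $a_1,\dots,a_d$ satisfy $\big|\sum_{j=1}^d a_j s^{\alpha_j}\big|\le A$ for every $s\in\mathcal S$. Then for every $1\le j\le d$, $$|a_j|\le\frac{4^{d\left((\alpha_d-\alpha_1)+\max_{1\le i\le d}|\alpha_i|+2\right)}\,A}{\|\mathcal S\|^{d-1}\,\Pi_j\mathcal A}.$$ *)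

From Stdlib Require Import Reals List.
Import ListNotations.
Open Scope R_scope.

(* Indices are 0-based: s_1..s_{2^d} is s 0 .. s (2^d-1); alpha_1..alpha_d is alpha 0 .. alpha (d-1). *)

Definition list_min (l : list R) : R :=
  match l with nil => 0 | x :: t => fold_right Rmin x t end.

Definition list_max (l : list R) : R :=
  match l with nil => 0 | x :: t => fold_right Rmax x t end.

Definition list_sum (l : list R) : R := fold_right Rplus 0 l.
Definition list_prod (l : list R) : R := fold_right Rmult 1 l.

Definition min_sep (s : nat -> R) (N : nat) : R :=
  list_min (flat_map (fun j => map (fun i => Rabs (s j - s i)) (seq 0 j)) (seq 0 N)).

Definition Pi_prod (alpha : nat -> R) (d j : nat) : R :=
  list_prod (map (fun i => Rabs (alpha j - alpha i))
                 (filter (fun i => negb (Nat.eqb i j)) (seq 0 d))).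

Definition max_abs (alpha : nat -> R) (d : nat) : R :=
  list_max (map (fun i => Rabs (alpha i)) (seq 0 d)).

Definition gen_poly (a alpha : nat -> R) (d : nat) (x : R) : R :=
  list_sum (map (fun j => a j * Rpower x (alpha j)) (seq 0 d)).

From Stdlib Require Import Reals List Lra Lia Permutation.
Open Scope R_scope.

(* The proof is an induction on the number of exponents, carried out for sums
   indexed by an arbitrary duplicate-free list of indices, so that removing an
   index never forces a renumbering.  To bound a_j, pick another index k and
   put c = e_k.  The function g(x) = x^(-c) f(x) is a generalized polynomial
   in which the k-th term is constant; it is at most 4^M A in absolute value on
   the nodes, where M bounds the |e_i|.  Applying the mean value theorem on
   consecutive pairs of nodes yields half as many nodes, still separated by
   the same gap, on which the derivative
     g'(x) = sum_{i<>k} a_i (e_i - c) x^(e_i - c - 1)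
   is at most 2 * 4^M A / gap.  This has one term fewer, its coefficient of
   index j is a_j (e_j - c), and its exponent differences are the old ones, so
   the induction hypothesis applies; the factor |e_j - e_k| is exactly the new
   factor of the product Pi_j.  With d exponents this needs 2^(d-1) nodes, and
   the theorem follows by taking the first 2^(d-1) of the given 2^d nodes. *)

(* Generalized polynomials and Vandermonde-type products over an index list;
   [gen_poly] and [Pi_prod] are the instances with the list [seq 0 d]. *)
Definition psum (a e : nat -> R) (l : list nat) (x : R) : R :=
  list_sum (map (fun i => a i * Rpower x (e i)) l).

Definition pprod (e : nat -> R) (l : list nat) (j : nat) : R :=
  list_prod (map (fun i => Rabs (e j - e i)) (filter (fun i => negb (i =? j)%nat) l)).

Lemma list_sum_perm (l1 l2 : list R) : Permutation l1 l2 -> list_sum l1 = list_sum l2.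
Proof.
  unfold list_sum; induction 1; simpl; [reflexivity | rewrite IHPermutation; reflexivity | ring | congruence].
Qed.

Lemma list_prod_perm (l1 l2 : list R) : Permutation l1 l2 -> list_prod l1 = list_prod l2.
Proof.
  unfold list_prod; induction 1; simpl; [reflexivity | rewrite IHPermutation; reflexivity | ring | congruence].
Qed.

Lemma filter_perm {T : Type} (p : T -> bool) (l1 l2 : list T) :
  Permutation l1 l2 -> Permutation (filter p l1) (filter p l2).
Proof.
  induction 1; simpl; try destruct (p x); try destruct (p y); eauto using Permutation.
Qed.

Lemma list_sum_mult_r {T : Type} (F : T -> R) (r : R) (l : list T) :
  list_sum (map (fun i => F i * r) l) = list_sum (map F l) * r.
Proof. induction l as [|i l IH]; simpl; [ring | rewrite IH; ring]. Qed.

Lemma psum_perm (a e : nat -> R) (l1 l2 : list nat) (x : R) :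
  Permutation l1 l2 -> psum a e l1 x = psum a e l2 x.
Proof. intros H; apply list_sum_perm, Permutation_map, H. Qed.

Lemma pprod_perm (e : nat -> R) (l1 l2 : list nat) (j : nat) :
  Permutation l1 l2 -> pprod e l1 j = pprod e l2 j.
Proof. intros H; apply list_prod_perm, Permutation_map, filter_perm, H. Qed.

Lemma pprod_cons (e : nat -> R) (k : nat) (l : list nat) (j : nat) :
  k <> j -> pprod e (k :: l) j = Rabs (e j - e k) * pprod e l j.
Proof.
  intros Hkj; unfold pprod; simpl.
  rewrite (proj2 (Nat.eqb_neq k j) Hkj); reflexivity.
Qed.

Lemma pprod_shift (e : nat -> R) (c : R) (l : list nat) (j : nat) :
  pprod (fun i => e i - c) l j = pprod e l j.
Proof.
  unfold pprod; f_equal; apply map_ext; intros i; f_equal; ring.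
Qed.

Lemma psum_mult_Rpower (a e : nat -> R) (c : R) (l : list nat) (x : R) :
  psum a e l x * Rpower x (- c) = psum a (fun i => e i - c) l x.
Proof.
  unfold psum; rewrite <- list_sum_mult_r; f_equal; apply map_ext; intros i.
  rewrite Rmult_assoc, <- Rpower_plus; reflexivity.
Qed.

Lemma psum_derivative (a e : nat -> R) (l : list nat) (x : R) : 0 < x ->
  derivable_pt_lim (psum a e l) x (psum (fun i => a i * e i) (fun i => e i - 1) l x).
Proof.
  intros Hx; induction l as [|i l IH].
  - apply derivable_pt_lim_const.
  - replace (psum _ _ (i :: l) x)
      with (a i * (e i * Rpower x (e i - 1)) + psum (fun i => a i * e i) (fun i => e i - 1) l x)
      by (unfold psum, list_sum; simpl; ring).
    apply (derivable_pt_lim_plus (fun y => a i * Rpower y (e i)) (psum a e l)); [|exact IH].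
    apply (derivable_pt_lim_scal (fun y => Rpower y (e i))), derivable_pt_lim_power, Hx.
Qed.

Lemma Rabs_le_bounds (x M : R) : Rabs x <= M -> - M <= x <= M.
Proof. intros H; pose proof (Rle_abs x); pose proof (Rle_abs (- x)); rewrite Rabs_Ropp in *; lra. Qed.

Lemma Rpower_pos (x e : R) : 0 < Rpower x e.
Proof. apply exp_pos. Qed.

Lemma Rpower_le_4 (x e M : R) : 1 <= x <= 4 -> Rabs e <= M -> Rpower x e <= Rpower 4 M.
Proof.
  intros Hx He.
  assert (HeM : e <= M) by (apply Rabs_le_bounds in He; lra).
  assert (HM : 0 <= M) by (pose proof (Rabs_pos e); lra).
  apply Rle_trans with (Rpower x M); [apply Rle_Rpower; lra|].
  apply Rle_Rpower_l; lra.
Qed.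

Lemma psum_shift_bound (a e : nat -> R) (l : list nat) (x c M A : R) :
  1 <= x <= 4 -> Rabs c <= M -> Rabs (psum a e l x) <= A ->
  Rabs (psum a (fun i => e i - c) l x) <= Rpower 4 M * A.
Proof.
  intros Hx Hc Hf.
  rewrite <- psum_mult_Rpower, Rabs_mult, (Rabs_right (Rpower _ _)) by (left; apply Rpower_pos).
  rewrite Rmult_comm; apply Rmult_le_compat; try apply Rabs_pos; try (left; apply Rpower_pos).
  - apply Rpower_le_4; [exact Hx | rewrite Rabs_Ropp; exact Hc].
  - exact Hf.
Qed.

Lemma mvt_derivative_bound (f f' : R -> R) (u v B dl : R) :
  0 < dl -> u + dl <= v ->
  (forall x, u <= x <= v -> derivable_pt_lim f x (f' x)) ->
  Rabs (f u) <= B -> Rabs (f v) <= B ->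
  exists xi, u < xi < v /\ Rabs (f' xi) <= 2 * B / dl.
Proof.
  intros Hdl Huv Hder Hu Hv.
  destruct (MVT_cor2 f f' u v ltac:(lra) Hder) as [xi [Heq Hxi]].
  exists xi; split; [exact Hxi|].
  apply (Rmult_le_reg_r dl); [exact Hdl|]; unfold Rdiv; rewrite Rmult_assoc, Rinv_l, Rmult_1_r by lra.
  assert (Hdiff : Rabs (f' xi) * (v - u) <= 2 * B).
  { rewrite <- (Rabs_right (v - u)), <- Rabs_mult, <- Heq by lra.
    eapply Rle_trans; [apply Rabs_triang | rewrite Rabs_Ropp; lra]. }
  eapply Rle_trans; [|exact Hdiff].
  apply Rmult_le_compat_l; [apply Rabs_pos | lra].
Qed.

(* Choice over finitely many indices needs no axiom. *)
Lemma finite_choice (P : nat -> R -> Prop) (N : nat) :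
  (forall i, (i < N)%nat -> exists x, P i x) ->
  exists xi : nat -> R, forall i, (i < N)%nat -> P i (xi i).
Proof.
  induction N as [|N IH]; intros HP.
  - exists (fun _ => 0); intros i Hi; lia.
  - destruct IH as [xi Hxi]; [intros i Hi; apply HP; lia|].
    destruct (HP N ltac:(lia)) as [x Hx].
    exists (fun i => if (i =? N)%nat then x else xi i); intros i Hi.
    destruct (Nat.eqb_spec i N) as [->|HiN]; [exact Hx | apply Hxi; lia].
Qed.

Definition spaced_nodes (t : nat -> R) (N : nat) (dl : R) : Prop :=
  (forall i, (i < N)%nat -> 1 <= t i <= 4) /\
  (forall i, (S i < N)%nat -> t i + dl <= t (S i)).

Lemma interlaced_nodes (t xi : nat -> R) (N : nat) (dl : R) :
  spaced_nodes t (2 * N) dl ->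
  (forall i, (i < N)%nat -> t (2 * i)%nat < xi i < t (2 * i + 1)%nat) ->
  spaced_nodes xi N dl.
Proof.
  intros [Hrange Hsep] Hxi; split.
  - intros i Hi.
    pose proof (Hxi i Hi); pose proof (Hrange (2 * i)%nat ltac:(lia));
      pose proof (Hrange (2 * i + 1)%nat ltac:(lia)); lra.
  - intros i Hi.
    pose proof (Hxi i ltac:(lia)); pose proof (Hxi (S i) Hi).
    pose proof (Hsep (2 * i + 1)%nat ltac:(lia)) as Hs.
    replace (S (2 * i + 1)) with (2 * S i)%nat in Hs by lia; lra.
Qed.

Lemma derivative_on_half_nodes (b e : nat -> R) (l : list nat) (t : nat -> R) (N : nat) (B dl : R) :
  0 < dl -> spaced_nodes t (2 * N) dl ->
  (forall m, (m < 2 * N)%nat -> Rabs (psum b e l (t m)) <= B) ->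
  exists xi, spaced_nodes xi N dl /\
    forall i, (i < N)%nat ->
      Rabs (psum (fun i => b i * e i) (fun i => e i - 1) l (xi i)) <= 2 * B / dl.
Proof.
  intros Hdl Ht HB.
  destruct (finite_choice (fun i x => t (2 * i)%nat < x < t (2 * i + 1)%nat /\
               Rabs (psum (fun i => b i * e i) (fun i => e i - 1) l x) <= 2 * B / dl) N)
    as [xi Hxi].
  - intros i Hi.
    destruct Ht as [Hrange Hsep].
    pose proof (Hrange (2 * i)%nat ltac:(lia)).
    pose proof (Hsep (2 * i)%nat ltac:(lia)) as Hs.
    replace (S (2 * i)) with (2 * i + 1)%nat in Hs by lia.
    apply (mvt_derivative_bound (psum b e l)); [exact Hdl | exact Hs | | |].
    + intros x Hx; apply psum_derivative; lra.
    + apply HB; lia.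
    + apply HB; lia.
  - exists xi; split; [|intros i Hi; apply Hxi, Hi].
    apply (interlaced_nodes t); [exact Ht | intros i Hi; apply Hxi, Hi].
Qed.

Lemma exists_other_index (l : list nat) (j : nat) :
  NoDup l -> In j l -> (2 <= length l)%nat ->
  exists k l', k <> j /\ In j l' /\ Permutation l (k :: l').
Proof.
  intros Hnd Hj Hlen.
  destruct (in_split j l Hj) as [l1 [l2 ->]].
  assert (Hperm : Permutation (l1 ++ j :: l2) (j :: l1 ++ l2))
    by (symmetry; apply Permutation_middle).
  destruct (l1 ++ l2) as [|k r] eqn:Er.
  - apply Permutation_length in Hperm; simpl in Hperm; lia.
  - apply (Permutation_NoDup Hperm), NoDup_cons_iff in Hnd.
    exists k, (j :: r); repeat split; [|now left|].
    + intros ->; apply (proj1 Hnd); now left.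
    + rewrite Hperm; apply perm_swap.
Qed.

Definition coefficient_bound (n : nat) : Prop :=
  forall (t a e : nat -> R) (l : list nat) (A M Rr dl : R) (j : nat),
  0 < dl -> spaced_nodes t (2 ^ n) dl ->
  length l = S n -> NoDup l -> In j l ->
  (forall i, In i l -> Rabs (e i) <= M) ->
  (forall i k, In i l -> In k l -> Rabs (e i - e k) <= Rr) ->
  (forall m, (m < 2 ^ n)%nat -> Rabs (psum a e l (t m)) <= A) ->
  Rabs (a j) * pprod e l j * dl ^ n <= Rpower 4 (M + INR n * (Rr + 2)) * A.

(* One exponent: a_j = f(x) x^(-e_j) at any node x. *)
Lemma coefficient_bound_0 : coefficient_bound 0.
Proof.
  intros t a e l A M Rr dl j _ [Hrange _] Hlen _ Hj He _ HA.
  destruct l as [|i [|]]; simpl in Hlen; try lia.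
  destruct Hj as [<-|[]].
  assert (Hf := HA 0%nat ltac:(simpl; lia)).
  assert (Hx := Hrange 0%nat ltac:(simpl; lia)).
  assert (Hb := psum_shift_bound a e (i :: nil) (t 0%nat) (e i) M A Hx ltac:(apply He; now left) Hf).
  unfold psum, list_sum in Hb; simpl in Hb.
  rewrite Rminus_diag, Rpower_O, Rmult_1_r, Rplus_0_r in Hb by lra.
  unfold pprod, list_prod; simpl; rewrite Nat.eqb_refl; simpl.
  replace (M + 0 * (Rr + 2)) with M by ring.
  rewrite !Rmult_1_r; exact Hb.
Qed.

Lemma bound_after_differentiation (L X M A dl : R) (n : nat) :
  0 < dl -> 0 <= A ->
  L * dl ^ n <= Rpower 4 X * (2 * (Rpower 4 M * A) / dl) ->
  L * dl ^ S n <= Rpower 4 (X + M + 1) * A.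
Proof.
  intros Hdl HA H.
  rewrite !Rpower_plus, Rpower_1 by lra.
  assert (HXM : 0 <= Rpower 4 X * Rpower 4 M * A)
    by (apply Rmult_le_pos; [apply Rmult_le_pos; left; apply Rpower_pos | exact HA]).
  apply Rmult_le_compat_r with (r := dl) in H; [|lra].
  replace (Rpower 4 X * (2 * (Rpower 4 M * A) / dl) * dl)
    with (2 * (Rpower 4 X * Rpower 4 M * A)) in H by (field; lra).
  replace (L * dl ^ S n) with (L * dl ^ n * dl) by (simpl; ring).
  lra.
Qed.

(* The induction step, for a list written as k :: l' with j in l':
   differentiate x^(-e_k) f(x) and apply the hypothesis to the derivative. *)
Lemma coefficient_bound_step_cons (n : nat) (IH : coefficient_bound n)
  (t a e : nat -> R) (k : nat) (l : list nat) (A M Rr dl : R) (j : nat) :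
  0 < dl -> spaced_nodes t (2 ^ S n) dl ->
  length l = S n -> NoDup l -> In j l -> k <> j ->
  (forall i, In i (k :: l) -> Rabs (e i) <= M) ->
  (forall i i', In i (k :: l) -> In i' (k :: l) -> Rabs (e i - e i') <= Rr) ->
  (forall m, (m < 2 ^ S n)%nat -> Rabs (psum a e (k :: l) (t m)) <= A) ->
  Rabs (a j) * pprod e (k :: l) j * dl ^ S n <= Rpower 4 (M + INR (S n) * (Rr + 2)) * A.
Proof.
  intros Hdl Ht Hlen Hnd Hj Hkj He HR HA.
  set (c := e k).
  set (B := Rpower 4 M * A).
  assert (HA0 : 0 <= A) by (eapply Rle_trans; [apply Rabs_pos | apply (HA 0%nat)];
                            pose proof (Nat.pow_nonzero 2 (S n)); lia).
  assert (Hg : forall m, (m < 2 * 2 ^ n)%nat -> Rabs (psum a (fun i => e i - c) (k :: l) (t m)) <= B)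
    by (intros m Hm; apply psum_shift_bound;
        [apply (proj1 Ht); simpl; lia | apply He; now left | apply HA; simpl; lia]).
  replace (2 ^ S n)%nat with (2 * 2 ^ n)%nat in Ht by (simpl; lia).
  destruct (derivative_on_half_nodes a (fun i => e i - c) (k :: l) t (2 ^ n) B dl Hdl Ht Hg)
    as [xi [Hxi Hder]].
  (* in g' the k-th term vanishes, leaving a generalized polynomial over l *)
  set (a' := fun i => a i * (e i - c)).
  set (e' := fun i => e i - c - 1).
  assert (Hg' : forall x, psum (fun i => a i * (e i - c)) (fun i => e i - c - 1) (k :: l) x
                          = psum a' e' l x).
  { intros x.
    change (a k * (e k - c) * Rpower x (e k - c - 1) + psum a' e' l x = psum a' e' l x).
    unfold c; rewrite Rminus_diag; ring. }
  assert (IHl := IH xi a' e' l (2 * B / dl) (Rr + 1) Rr dl j Hdl Hxi Hlen Hnd Hj).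
  specialize (IHl ltac:(intros i Hi; unfold e';
    pose proof (HR i k ltac:(now right) ltac:(now left)) as Hik;
    apply Rabs_le_bounds in Hik; apply Rabs_le; unfold c; lra)).
  specialize (IHl ltac:(intros i i' Hi Hi'; unfold e';
    replace (e i - c - 1 - (e i' - c - 1)) with (e i - e i') by ring; apply HR; now right)).
  specialize (IHl ltac:(intros m Hm; rewrite <- Hg'; apply Hder, Hm)).
  (* the factor |e_j - e_k| joins Pi_j *)
  unfold e' in IHl; rewrite !pprod_shift in IHl; unfold a' in IHl.
  rewrite Rabs_mult in IHl; fold c in IHl.
  rewrite pprod_cons, <- Rmult_assoc by exact Hkj; fold c.
  replace (M + INR (S n) * (Rr + 2)) with ((Rr + 1 + INR n * (Rr + 2)) + M + 1)
    by (rewrite S_INR; ring).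
  exact (bound_after_differentiation _ _ _ _ _ n Hdl HA0 IHl).
Qed.

Lemma coefficient_bound_all (n : nat) : coefficient_bound n.
Proof.
  induction n as [|n IH]; [exact coefficient_bound_0|].
  intros t a e l A M Rr dl j Hdl Ht Hlen Hnd Hj He HR HA.
  destruct (exists_other_index l j Hnd Hj ltac:(lia)) as [k [l' [Hkj [Hj' Hperm]]]].
  assert (Hin : forall i, In i (k :: l') -> In i l)
    by (intros i Hi; apply (Permutation_in i (Permutation_sym Hperm)), Hi).
  rewrite (pprod_perm e l (k :: l') j Hperm).
  apply (coefficient_bound_step_cons n IH t a e k l' A M Rr dl j); auto.
  - apply Permutation_length in Hperm; simpl in Hperm; lia.
  - apply (Permutation_NoDup Hperm) in Hnd; apply NoDup_cons_iff in Hnd; apply Hnd.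
  - intros m Hm; rewrite <- (psum_perm a e l (k :: l') _ Hperm); apply HA, Hm.
Qed.

Lemma fold_right_Rmax_ge (x : R) (l : list R) :
  x <= fold_right Rmax x l /\ forall y, In y l -> y <= fold_right Rmax x l.
Proof.
  induction l as [|z l [IH1 IH2]]; simpl; [split; [lra | tauto]|]; split.
  - eapply Rle_trans; [exact IH1 | apply Rmax_r].
  - intros y [->|Hy]; [apply Rmax_l | eapply Rle_trans; [apply IH2, Hy | apply Rmax_r]].
Qed.

Lemma list_max_ge (y : R) (l : list R) : In y l -> y <= list_max l.
Proof.
  destruct l as [|x l]; [intros []|]; simpl; intros [->|Hy];
    [apply (proj1 (fold_right_Rmax_ge y l)) | apply (proj2 (fold_right_Rmax_ge x l)), Hy].
Qed.

Lemma fold_right_Rmin_le (x : R) (l : list R) :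
  fold_right Rmin x l <= x /\ forall y, In y l -> fold_right Rmin x l <= y.
Proof.
  induction l as [|z l [IH1 IH2]]; simpl; [split; [lra | tauto]|]; split.
  - eapply Rle_trans; [apply Rmin_r | exact IH1].
  - intros y [->|Hy]; [apply Rmin_l | eapply Rle_trans; [apply Rmin_r | apply IH2, Hy]].
Qed.

Lemma list_min_le (y : R) (l : list R) : In y l -> list_min l <= y.
Proof.
  destruct l as [|x l]; [intros []|]; simpl; intros [->|Hy];
    [apply (proj1 (fold_right_Rmin_le y l)) | apply (proj2 (fold_right_Rmin_le x l)), Hy].
Qed.

Lemma list_min_In (l : list R) : l <> nil -> In (list_min l) l.
Proof.
  destruct l as [|x l]; [tauto|]; intros _; simpl.
  induction l as [|z l IH]; simpl; [now left|].
  destruct (Rle_dec z (fold_right Rmin x l)) as [Hle|Hgt].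
  - rewrite Rmin_left by exact Hle; right; now left.
  - rewrite Rmin_right by lra; destruct IH as [E|H]; [now left | right; now right].
Qed.

Lemma list_prod_pos (l : list R) : (forall y, In y l -> 0 < y) -> 0 < list_prod l.
Proof.
  unfold list_prod; induction l as [|z l IH]; simpl; intros H; [lra|].
  apply Rmult_lt_0_compat; [apply H; now left | apply IH; intros y Hy; apply H; now right].
Qed.

Lemma min_sep_spaced (s : nat -> R) (N : nat) :
  (2 <= N)%nat -> (forall i, (i < N)%nat -> 1 <= s i <= 4) ->
  (forall i j, (i < j)%nat -> (j < N)%nat -> s i < s j) ->
  0 < min_sep s N /\ spaced_nodes s N (min_sep s N).
Proof.
  intros HN Hrange Hincr.
  set (gaps := flat_map (fun j => map (fun i => Rabs (s j - s i)) (seq 0 j)) (seq 0 N)).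
  assert (Hgap : forall y, In y gaps -> exists i j, (i < j < N)%nat /\ y = Rabs (s j - s i)).
  { intros y Hy; apply in_flat_map in Hy; destruct Hy as [j [Hj Hy]].
    apply in_map_iff in Hy; destruct Hy as [i [<- Hi]].
    apply in_seq in Hj, Hi; exists i, j; split; [lia | reflexivity]. }
  assert (Hmem : forall i j, (i < j < N)%nat -> In (Rabs (s j - s i)) gaps).
  { intros i j Hij; apply in_flat_map; exists j; split; [apply in_seq; lia|].
    apply in_map_iff; exists i; split; [reflexivity | apply in_seq; lia]. }
  split; [|split; [exact Hrange|]].
  - change (0 < list_min gaps).
    destruct (Hgap _ (list_min_In gaps ltac:(intros E; rewrite E in Hmem; apply (Hmem 0 1)%nat; lia)))
      as [i [j [Hij ->]]].
    pose proof (Hincr i j ltac:(lia) ltac:(lia)); apply Rabs_pos_lt; lra.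
  - intros i Hi.
    pose proof (Hincr i (S i) ltac:(lia) Hi).
    assert (Hmin : min_sep s N <= Rabs (s (S i) - s i)) by (apply list_min_le, Hmem; lia).
    rewrite Rabs_right in Hmin by lra; lra.
Qed.

Lemma spaced_nodes_prefix (t : nat -> R) (N N' : nat) (dl : R) :
  (N' <= N)%nat -> spaced_nodes t N dl -> spaced_nodes t N' dl.
Proof. intros HN [Hrange Hsep]; split; intros i Hi; [apply Hrange | apply Hsep]; lia. Qed.

Lemma max_abs_ge (alpha : nat -> R) (d i : nat) : (i < d)%nat -> Rabs (alpha i) <= max_abs alpha d.
Proof.
  intros Hi; apply list_max_ge, in_map_iff; exists i; split; [reflexivity | apply in_seq; lia].
Qed.

Lemma Pi_prod_pos (alpha : nat -> R) (d j : nat) :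
  (forall i j, (i < j)%nat -> (j < d)%nat -> alpha i < alpha j) -> (j < d)%nat ->
  0 < Pi_prod alpha d j.
Proof.
  intros Hincr Hj; apply list_prod_pos; intros y Hy.
  apply in_map_iff in Hy; destruct Hy as [i [<- Hi]].
  apply filter_In in Hi; destruct Hi as [Hi Hne]; apply in_seq in Hi.
  destruct (Nat.eqb_spec i j) as [|Hij]; [discriminate|].
  apply Rabs_pos_lt; destruct (Nat.lt_ge_cases i j) as [Hlt|Hge].
  - pose proof (Hincr i j Hlt Hj); lra.
  - pose proof (Hincr j i ltac:(lia) ltac:(lia)); lra.
Qed.

Lemma spread_bound (alpha : nat -> R) (d : nat) :
  (forall i j, (i < j)%nat -> (j < d)%nat -> alpha i < alpha j) ->
  forall i k, (i < d)%nat -> (k < d)%nat -> Rabs (alpha i - alpha k) <= alpha (d - 1)%nat - alpha 0%nat.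
Proof.
  intros Hincr i k Hi Hk.
  assert (Hmono : forall p q, (p <= q)%nat -> (q < d)%nat -> alpha p <= alpha q).
  { intros p q Hpq Hq; destruct (Nat.eq_dec p q) as [->|]; [lra | left; apply Hincr; lia]. }
  pose proof (Hmono 0%nat i ltac:(lia) Hi); pose proof (Hmono i (d - 1)%nat ltac:(lia) ltac:(lia)).
  pose proof (Hmono 0%nat k ltac:(lia) Hk); pose proof (Hmono k (d - 1)%nat ltac:(lia) ltac:(lia)).
  apply Rabs_le; lra.
Qed.

Lemma coefficient_bound_increasing (d : nat) (t alpha a : nat -> R) (A dl : R) (j : nat) :
  (1 <= d)%nat -> 0 < dl -> spaced_nodes t (2 ^ (d - 1)) dl ->
  (forall i k, (i < k)%nat -> (k < d)%nat -> alpha i < alpha k) ->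
  (forall m, (m < 2 ^ (d - 1))%nat -> Rabs (gen_poly a alpha d (t m)) <= A) ->
  (j < d)%nat ->
  Rabs (a j) * Pi_prod alpha d j * dl ^ (d - 1)
    <= Rpower 4 (INR d * ((alpha (d - 1)%nat - alpha 0%nat) + max_abs alpha d + 2)) * A.
Proof.
  intros Hd Hdl Hnodes Hincr HA Hj.
  set (M := max_abs alpha d); set (Rr := alpha (d - 1)%nat - alpha 0%nat).
  assert (HM : forall i, In i (seq 0 d) -> Rabs (alpha i) <= M)
    by (intros i Hi; apply in_seq in Hi; apply max_abs_ge; lia).
  assert (HR : forall i k, In i (seq 0 d) -> In k (seq 0 d) -> Rabs (alpha i - alpha k) <= Rr)
    by (intros i k Hi Hk; apply in_seq in Hi, Hk; apply spread_bound; auto; lia).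
  assert (Hbound := coefficient_bound_all (d - 1) t a alpha (seq 0 d) A M Rr dl j Hdl Hnodes
    ltac:(rewrite length_seq; lia) (seq_NoDup d 0) ltac:(apply in_seq; lia) HM HR HA).
  (* the exponent d (Rr + M + 2) dominates M + (d-1)(Rr+2) *)
  assert (HM0 : 0 <= M) by (pose proof (HM 0%nat ltac:(apply in_seq; lia)); pose proof (Rabs_pos (alpha 0%nat)); lra).
  assert (HR0 : 0 <= Rr) by (pose proof (spread_bound alpha d Hincr 0 0 ltac:(lia) ltac:(lia)) as X;
                             rewrite Rminus_diag, Rabs_R0 in X; exact X).
  assert (HA0 : 0 <= A)
    by (eapply Rle_trans; [apply Rabs_pos | apply (HA 0%nat)]; pose proof (Nat.pow_nonzero 2 (d - 1)); lia).
  eapply Rle_trans; [exact Hbound|]; apply Rmult_le_compat_r; [exact HA0|].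
  apply Rle_Rpower; [lra|].
  rewrite minus_INR by lia; simpl INR.
  assert (1 <= INR d) by (apply (le_INR 1); lia); nra.
Qed.

Theorem lemma10p3 (d : nat) (s alpha a : nat -> R) (A : R)
  (hd : (1 <= d)%nat)
  (hs_range : forall i, (i < 2 ^ d)%nat -> 1 <= s i <= 4)
  (hs_incr : forall i j, (i < j)%nat -> (j < 2 ^ d)%nat -> s i < s j)
  (halpha_incr : forall i j, (i < j)%nat -> (j < d)%nat -> alpha i < alpha j)
  (hA : 0 < A)
  (hbound : forall i, (i < 2 ^ d)%nat -> Rabs (gen_poly a alpha d (s i)) <= A) :
  forall j, (j < d)%nat ->
    Rabs (a j) <=
      Rpower 4 (INR d * ((alpha (d - 1)%nat - alpha 0%nat) + max_abs alpha d + 2)) * A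
      / (min_sep s (2 ^ d) ^ (d - 1) * Pi_prod alpha d j).
Proof.
  intros j Hj.
  assert (Htwo : (2 <= 2 ^ d)%nat) by (apply (Nat.pow_le_mono_r 2 1 d); lia).
  destruct (min_sep_spaced s (2 ^ d) Htwo hs_range hs_incr) as [Hdl Hnodes].
  assert (Hbound := coefficient_bound_increasing d s alpha a A (min_sep s (2 ^ d)) j hd Hdl
    (spaced_nodes_prefix s (2 ^ d) (2 ^ (d - 1)) _ ltac:(apply Nat.pow_le_mono_r; lia) Hnodes)
    halpha_incr ltac:(intros m Hm; apply hbound; pose proof (Nat.pow_le_mono_r 2 (d - 1) d); lia) Hj).
  assert (Hpos : 0 < min_sep s (2 ^ d) ^ (d - 1) * Pi_prod alpha d j)
    by (apply Rmult_lt_0_compat; [apply pow_lt, Hdl | apply Pi_prod_pos; auto]).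
  apply (Rmult_le_reg_r _ _ _ Hpos); unfold Rdiv; rewrite Rmult_assoc, Rinv_l, Rmult_1_r by lra.
  rewrite <- Rmult_assoc, (Rmult_assoc (Rabs (a j))), (Rmult_comm (_ ^ _)), <- Rmult_assoc.
  exact Hbound.
Qed.
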